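(* Let $\mathcal X\subset\mathbb{R}$ be a nonempty compact convex set of control angles and $\epsilon_r>0$. Let $\theta\in\mathbb{R}^n$ contain, as linear coordinates, two matrices $R^a,R^b\in\mathbb{R}^{3\times3}$, and let $R_x(u)=\begin{pmatrix}1&0&0\\0&\cos u&-\sin u\\0&\sin u&\cos u\end{pmatrix}$. Define $$b(\theta,u)=-\frac{\mathrm{tr}\big((R^a)^TR^bR_x(u)^T\big)}{\sqrt{\|R^a\|_F^2+\epsilon_r}\sqrt{\|R^b\|_F^2+\epsilon_r}}.$$ Then for every $u\in\mathcal X$, $b(\cdot,u)$ is twice differentiable in $\theta$ with locally Lipschitz second derivatives and is $L$-curvature bounded for a constant $L$ independent of $u$, and $\|\partial^2b/\partial\theta\partial u\|$ is uniformly bounded over $\theta\in\mathbb{R}^n$, $u\in\mathcal X$.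
   Context: $\|\cdot\|_F$ is the Frobenius norm. A function $\phi$ is $L$-curvature bounded if $\phi(x)+\frac L2\|x\|^2$ is convex and $\nabla\phi$ is $L$-Lipschitz. *)

From HB Require Import structures.
From mathcomp Require Import all_boot all_order all_algebra.
From mathcomp Require Import all_classical all_reals all_analysis.
Set Implicit Arguments. Unset Strict Implicit. Unset Printing Implicit Defensive.
Import Order.TTheory GRing.Theory Num.Theory.
Import numFieldNormedType.Exports.
Local Open Scope classical_set_scope.
Local Open Scope ring_scope.

Definition Rx (R : realType) (u : R) : 'M[R]_3 :=
  \matrix_(i < 3, j < 3)
    match nat_of_ord i, nat_of_ord j with
    | 0, 0 => 1
    | 1, 1 => cos u
    | 1, 2 => - sin u
    | 2, 1 => sin u
    | 2, 2 => cos u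
    | _, _ => 0
    end.

Definition frob2 (R : realType) (A : 'M[R]_3) : R :=
  \sum_(i < 3) \sum_(j < 3) A i j ^+ 2.

Definition enorm (R : realType) (n : nat) (v : 'rV[R]_n) : R :=
  Num.sqrt (\sum_(i < n) v ord0 i ^+ 2).

Definition coordmx (R : realType) (n : nat) (idx : 'I_3 * 'I_3 -> 'I_n)
  (theta : 'rV[R]_n) : 'M[R]_3 := \matrix_(i, j) theta ord0 (idx (i, j)).

Definition bfun (R : realType) (n : nat) (ia ib : 'I_3 * 'I_3 -> 'I_n)
  (eps : R) (theta : 'rV[R]_n) (u : R) : R :=
  let Ra := coordmx ia theta in
  let Rb := coordmx ib theta in
  - \tr (Ra^T *m Rb *m (Rx u)^T)
    / (Num.sqrt (frob2 Ra + eps) * Num.sqrt (frob2 Rb + eps)).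

Definition evec (R : realType) (n : nat) (i : 'I_n) : 'rV[R]_n := delta_mx ord0 i.

Definition partial (R : realType) (n : nat) (f : 'rV[R]_n -> R) (i : 'I_n)
  (x : 'rV[R]_n) : R := 'D_(evec R i) f x.

Definition grad (R : realType) (n : nat) (f : 'rV[R]_n -> R) (x : 'rV[R]_n)
  : 'rV[R]_n := \row_i partial f i x.

Definition hess (R : realType) (n : nat) (f : 'rV[R]_n -> R) (i j : 'I_n)
  (x : 'rV[R]_n) : R := partial (partial f i) j x.

Definition twice_differentiable (R : realType) (n : nat) (f : 'rV[R]_n -> R) :=
  forall x : 'rV[R]_n, differentiable f x /\
    forall i : 'I_n, differentiable (partial f i) x.

Definition locally_lipschitz (R : realType) (n : nat) (g : 'rV[R]_n -> R) :=
  forall x : 'rV[R]_n, exists r : R, 0 < r /\ exists K : R,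
    forall y z : 'rV[R]_n, enorm (y - x) < r -> enorm (z - x) < r ->
      `|g y - g z| <= K * enorm (y - z).

Definition hess_locally_lipschitz (R : realType) (n : nat) (f : 'rV[R]_n -> R) :=
  forall i j : 'I_n, locally_lipschitz (hess f i j).

Definition convex_fun (R : realType) (n : nat) (g : 'rV[R]_n -> R) :=
  forall (x y : 'rV[R]_n) (t : R), 0 <= t -> t <= 1 ->
    g (t *: x + (1 - t) *: y) <= t * g x + (1 - t) * g y.

Definition curvature_bounded (R : realType) (n : nat) (L : R)
  (phi : 'rV[R]_n -> R) :=
  convex_fun (fun x => phi x + L / 2 * enorm x ^+ 2) /\
  forall x y : 'rV[R]_n, enorm (grad phi x - grad phi y) <= L * enorm (x - y).

Definition convex_setR (R : realType) (X : set R) :=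
  forall x y t, X x -> X y -> 0 <= t -> t <= 1 -> X (t * x + (1 - t) * y).

Definition mixed_fun (R : realType) (n : nat) (b : 'rV[R]_n -> R -> R)
  (i : 'I_n) (theta : 'rV[R]_n) : R -> R :=
  fun u => partial (fun th => b th u) i theta.

(* Let N_a be R^a divided by s_a = sqrt(|R^a|_F^2 + eps), and similarly N_b.  Then
   b(theta, u) = - tr(N_a^T N_b R_x(u)^T) = cos u P(theta) + sin u Q(theta) + T(theta)
   with P, Q, T polynomials in the entries of N_a and N_b.  The partial derivatives of
   these entries and of 1/s_a are again polynomials in the entries and in 1/s_a, and all
   of these are bounded (|N_a| <= 1 entrywise, 1/s_a <= 1/sqrt eps).  So the class [npoly]
   of such polynomials consists of bounded differentiable functions and is closed under
   partial derivatives: P, Q and T have bounded derivatives of every order.  Bounded third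
   derivatives make the Hessian globally Lipschitz; a Hessian bounded by H gives, by the
   mean value theorem along segments, an (n^2 H)-Lipschitz gradient and convexity of
   b + n^2 H |theta|^2; the mixed derivative -sin u dP + cos u dQ is bounded uniformly.
   None of this uses the hypotheses on the control set X or on the index maps. *)

From HB Require Import structures.
From mathcomp Require Import all_boot all_order all_algebra.
From mathcomp Require Import all_classical all_reals all_analysis.
From mathcomp Require Import ring lra.
Import Order.TTheory GRing.Theory Num.Theory.
Import numFieldNormedType.Exports.
Local Open Scope classical_set_scope.
Local Open Scope ring_scope.
Set Implicit Arguments. Unset Strict Implicit.

Lemma ler_sum_term (R : numDomainType) (I : finType) (F : I -> R) i :
  (forall j, 0 <= F j) -> F i <= \sum_j F j.
Proof. by move=> F0; rewrite (bigD1 i) //= lerDl sumr_ge0. Qed.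
Arguments ler_sum_term {R I} F i.

Lemma fin_ubound (R : realDomainType) (I : finType) (T : Type) (F : I -> T -> R) :
  (forall i, exists C, forall x, `|F i x| <= C) ->
  exists C : R, 0 <= C /\ forall i x, `|F i x| <= C.
Proof.
move=> /fin_all_exists[C FC].
exists (\sum_i `|C i : R|); split; first exact: sumr_ge0.
move=> i x; apply: le_trans (FC i x) _; apply: le_trans (ler_norm _) _.
by rewrite (bigD1 i) //= lerDl sumr_ge0.
Qed.

Section DerivativeAlongLines.
Variables (R : realType) (U : normedModType R).

Lemma derive_alongE (W : normedModType R) (f : U -> W) x v :
  'D_v f x = 'D_1 (fun h : R => f (h *: v + x)) 0.
Proof.
rewrite /derive; set g1 := fun h => h^-1 *: _; set g2 := fun h => h^-1 *: _.
suff -> : g1 = g2 by [].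
by apply/funext => h; rewrite /g1 /g2 /= addr0 scale0r add0r [_%:A]mulr1.
Qed.

Lemma is_derive_alongP (W : normedModType R) (f : U -> W) x v df :
  is_derive x v f df <-> is_derive (0 : R) 1 (fun h : R => f (h *: v + x)) df.
Proof.
split=> -[fv dfE]; split.
- exact/(derivable1P f x v).
- by rewrite -derive_alongE.
- exact/(derivable1P f x v).
- by rewrite derive_alongE.
Qed.

Lemma is_derive_comp1 (g : R -> R) (f : U -> R) x v dg df :
  is_derive (f x) 1 g dg -> is_derive x v f df ->
  is_derive x v (fun y => g (f y)) (dg * df).
Proof.
move=> gdg /is_derive_alongP fdf; apply/is_derive_alongP.
by apply: is_derive1_comp; rewrite scale0r add0r.
Qed.

End DerivativeAlongLines.

Lemma le_chord_derive_osc (R : realType) (k dk : R -> R) (M : R) :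
  (forall s, is_derive s (1 : R) k (dk s)) ->
  (forall a b, 0 <= a <= 1 -> 0 <= b <= 1 -> dk a - dk b <= M) ->
  forall t, 0 <= t <= 1 -> k t <= t * k 1 + (1 - t) * k 0 + M * (t * (1 - t)).
Proof.
move=> kdk oscM t /andP[t0 t1].
have kC a b : {within `[a, b], continuous k}.
  by apply: derivable_within_continuous => s _; case: (kdk s).
have [c1 + E1] := MVT_segment t0 (fun s _ => kdk s) (kC _ _).
rewrite in_itv /= => /andP[c10 c1t].
have [c2 + E2] := MVT_segment t1 (fun s _ => kdk s) (kC _ _).
rewrite in_itv /= => /andP[c2t c21].
have osc := oscM c1 c2.
rewrite c10 c21 (le_trans c1t t1) (le_trans t0 c2t) in osc.
have {}osc := osc isT isT.
have : 0 <= t * (1 - t) * (M - (dk c1 - dk c2)).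
  by rewrite !mulr_ge0 // subr_ge0.
have -> : k 1 = k t + dk c2 * (1 - t) by rewrite -E2; ring.
have -> : k 0 = k t - dk c1 * (t - 0) by rewrite -E1; ring.
nra.
Qed.

Section EuclideanNorm.
Variables (R : realType) (n : nat).
Local Notation V := 'rV[R]_n.
Implicit Types (x y v : V).

Lemma enorm_ge0 v : 0 <= enorm v.
Proof. exact: sqrtr_ge0. Qed.

Lemma sqr_enorm v : enorm v ^+ 2 = \sum_i v ord0 i ^+ 2.
Proof. by rewrite sqr_sqrtr // sumr_ge0 // => i _; rewrite sqr_ge0. Qed.

Lemma le_coord_enorm v i : `|v ord0 i| <= enorm v.
Proof.
rewrite -sqrtr_sqr ler_sqrt; last by rewrite sumr_ge0 // => j _; rewrite sqr_ge0.
by apply: ler_sum_term => j; rewrite sqr_ge0.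
Qed.

Lemma enorm_le_sum v : enorm v <= \sum_i `|v ord0 i|.
Proof.
have S0 : 0 <= \sum_i `|v ord0 i| by rewrite sumr_ge0.
rewrite -(ger0_norm S0) -sqrtr_sqr ler_sqrt ?sqr_ge0 // expr2 mulr_suml.
apply: ler_sum => i _; rewrite -[_ ^+ 2]ger0_norm ?sqr_ge0 // normrX expr2.
by rewrite ler_wpM2l // ler_sum_term.
Qed.

Lemma enormZ (c : R) v : enorm (c *: v) = `|c| * enorm v.
Proof.
rewrite /enorm -sqrtr_sqr -sqrtrM ?sqr_ge0 // mulr_sumr.
by congr Num.sqrt; apply: eq_bigr => i _; rewrite mxE exprMn.
Qed.

Lemma sqr_enorm_convex x y (t : R) :
  enorm (t *: x + (1 - t) *: y) ^+ 2 =
  t * enorm x ^+ 2 + (1 - t) * enorm y ^+ 2 - t * (1 - t) * enorm (x - y) ^+ 2.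
Proof.
rewrite !sqr_enorm !mulr_sumr -big_split -sumrB /=; apply: eq_bigr => i _.
by rewrite !mxE; ring.
Qed.

End EuclideanNorm.

Section Partials.
Variables (R : realType) (n : nat).
Local Notation V := 'rV[R]_n.
Implicit Types (f : V -> R) (x y z d : V).

Lemma is_derive_coord j x v : is_derive x v (fun y : V => y ord0 j) (v ord0 j).
Proof.
apply/is_derive_alongP.
have -> : (fun h : R => (h *: v + x) ord0 j) = id * cst (v ord0 j) + cst (x ord0 j).
  by apply/funext => h; rewrite !mxE.
by apply: is_derive_eq; rewrite scaler0 add0r addr0 [_%:A]mulr1.
Qed.

Lemma partial_val f i x df : is_derive x (evec R i) f df -> partial f i x = df.
Proof. by move=> fdf; rewrite /partial derive_val. Qed.

Lemma derive_partialE f x d : differentiable f x ->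
  'D_d f x = \sum_i d ord0 i * partial f i x.
Proof.
move=> fx; rewrite deriveE // {1}(row_sum_delta d) linear_sum.
by apply: eq_bigr => i _; rewrite linearZ /= /partial deriveE.
Qed.

Lemma is_derive_partial f i x : differentiable f x ->
  is_derive x (evec R i) f (partial f i x).
Proof. by move=> fx; apply/derivableP/diff_derivable. Qed.

Lemma partial_lincomb (a b : R) f g h i x :
  differentiable f x -> differentiable g x -> differentiable h x ->
  partial (fun y => a * f y + b * g y + h y) i x =
  a * partial f i x + b * partial g i x + partial h i x.
Proof.
move=> /(is_derive_partial i) fd /(is_derive_partial i) gd /(is_derive_partial i) hd.
have -> : (fun y => a * f y + b * g y + h y) = a *: f + b *: g + h by [].
exact: partial_val (is_deriveD (is_deriveD (is_deriveZ a fd) (is_deriveZ b gd)) hd).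
Qed.

Lemma is_derive_segment f x d (t : R) : (forall y, differentiable f y) ->
  is_derive t 1 (fun s : R => f (x + s *: d))
    (\sum_i d ord0 i * partial f i (x + t *: d)).
Proof.
move=> fdiff; apply/is_derive_alongP; rewrite -derive_partialE //.
have -> : (fun h : R => f (x + (h *: 1 + t) *: d)) =
          (fun h : R => f (h *: d + (x + t *: d))).
  by apply/funext => h; rewrite scalerDl [h *: 1]mulr1 addrCA.
have /is_derive_alongP// : is_derive (x + t *: d) d f ('D_d f (x + t *: d)).
  by apply/derivableP/diff_derivable.
Qed.

Lemma lipschitz_of_bounded_partials f (C : R) :
  (forall y, differentiable f y) -> (forall i y, `|partial f i y| <= C) ->
  forall y z, `|f y - f z| <= n%:R * C * enorm (y - z).
Proof.
move=> fdiff fC y z; set d := y - z.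
have fd s := is_derive_segment z d s fdiff.
have fdC : {within `[0, 1], continuous (fun s : R => f (z + s *: d))}.
  by apply: derivable_within_continuous => s _; case: (fd s).
have [c _] := MVT_segment ler01 (fun s _ => fd s) fdC.
have -> : z + 1 *: d = y by rewrite scale1r addrC subrK.
rewrite scale0r addr0 subr0 mulr1 => ->.
apply: (@le_trans _ _ (\sum_(i < n) C * enorm d)).
  apply: le_trans (ler_norm_sum _ _ _) _; apply: ler_sum => i _.
  by rewrite normrM mulrC ler_pM ?le_coord_enorm.
by rewrite sumr_const card_ord -mulrA mulr_natl.
Qed.

Lemma curvature_bounded_of_hess f (H : R) : 0 <= H ->
  (forall y, differentiable f y) -> (forall i y, differentiable (partial f i) y) ->
  (forall i j y, `|hess f i j y| <= H) ->
  curvature_bounded (2 * n%:R ^+ 2 * H) f.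
Proof.
move=> H0 fdiff pdiff hessH.
have grad_lip i y z : `|partial f i y - partial f i z| <= n%:R * H * enorm (y - z).
  by apply: lipschitz_of_bounded_partials => // j w; apply: hessH.
have nH0 : 0 <= n%:R * H by rewrite mulr_ge0.
split=> [x y t t0 t1 /= | x y].
- set d := x - y.
  set M := n%:R * (enorm d * (n%:R * H * enorm d)).
  have fd s := is_derive_segment y d s fdiff.
  have oscM a b : 0 <= a <= 1 -> 0 <= b <= 1 ->
      \sum_i d ord0 i * partial f i (y + a *: d) -
      \sum_i d ord0 i * partial f i (y + b *: d) <= M.
    move=> /andP[a0 a1] /andP[b0 b1]; apply: le_trans (ler_norm _) _.
    rewrite -sumrB; apply: le_trans (ler_norm_sum _ _ _) _.
    apply: (@le_trans _ _ (\sum_(i < n) enorm d * (n%:R * H * enorm d))); last first.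
      by rewrite /M sumr_const card_ord [in X in _ <= X]mulr_natl.
    apply: ler_sum => i _; rewrite -mulrBr normrM ler_pM ?le_coord_enorm //.
    apply: le_trans (grad_lip _ _ _) _; rewrite ler_wpM2l //.
    have -> : y + a *: d - (y + b *: d) = (a - b) *: d.
      by rewrite opprD addrACA subrr add0r -scalerBl.
    by rewrite enormZ ler_piMl ?enorm_ge0 // ler_norml; apply/andP; split; lra.
  have xtE : t *: x + (1 - t) *: y = y + t *: d.
    by rewrite /d scalerBr scalerBl scale1r addrCA.
  have := sqr_enorm_convex x y t; rewrite xtE -/d.
  have := le_chord_derive_osc fd oscM (t:=t).
  have -> : y + 1 *: d = x by rewrite scale1r addrC subrK.
  rewrite t0 t1 scale0r addr0 /M => /(_ isT) chord ->; nra.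
- apply: le_trans (enorm_le_sum _) _.
  apply: (@le_trans _ _ (\sum_(i < n) n%:R * H * enorm (x - y))).
    by apply: ler_sum => i _; rewrite !mxE grad_lip.
  rewrite sumr_const card_ord -mulr_natl.
  have : 0 <= n%:R * (n%:R * H * enorm (x - y)) by rewrite !mulr_ge0 ?enorm_ge0.
  nra.
Qed.

End Partials.

Section NormalisedCoordinates.
Variables (R : realType) (n : nat) (eps : R).
Hypothesis eps_gt0 : 0 < eps.
Local Notation V := 'rV[R]_n.
Local Notation index := ('I_3 * 'I_3 -> 'I_n)%type.
Implicit Types (ix : index) (x v : V).

Definition rfrob ix x := Num.sqrt (frob2 (coordmx ix x) + eps).
Definition inv_rfrob ix x := (rfrob ix x)^-1.
Definition ncoord ix k x := x ord0 (ix k) * inv_rfrob ix x.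
Definition ndot ix v x :=
  \sum_i \sum_j v ord0 (ix (i, j)) * ncoord ix (i, j) x.

Lemma frob2_coordmxE ix :
  (fun x => frob2 (coordmx ix x) + eps) =
  \sum_i \sum_j (fun x : V => x ord0 (ix (i, j))) ^+ 2 + cst eps.
Proof.
apply/funext => x; rewrite /= fct_sumE; congr (_ + _); apply: eq_bigr => i _.
by rewrite fct_sumE; apply: eq_bigr => j _; rewrite exprfctE mxE.
Qed.

Lemma frob2_coordmx_ge0 ix x : 0 <= frob2 (coordmx ix x).
Proof. by rewrite sumr_ge0 // => i _; rewrite sumr_ge0 // => j _; rewrite sqr_ge0. Qed.

Lemma frob2_eps_gt0 ix x : 0 < frob2 (coordmx ix x) + eps.
Proof. exact: ltr_wpDl (frob2_coordmx_ge0 ix x) eps_gt0. Qed.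

Lemma rfrob_gt0 ix x : 0 < rfrob ix x.
Proof. by rewrite sqrtr_gt0 frob2_eps_gt0. Qed.

Lemma abs_coord_le_rfrob ix k x : `|x ord0 (ix k)| <= rfrob ix x.
Proof.
rewrite -sqrtr_sqr ler_sqrt; last exact: ltW (frob2_eps_gt0 ix x).
apply: ler_wpDr; first exact: ltW.
rewrite /frob2 pair_bigA /=; case: k => i j.
under eq_bigr => p _ do rewrite mxE.
by apply: (ler_sum_term _ (i, j)) => p; exact: sqr_ge0.
Qed.

Lemma sqrt_eps_le_rfrob ix x : Num.sqrt eps <= rfrob ix x.
Proof.
rewrite /rfrob ler_sqrt; last exact: ltW (frob2_eps_gt0 ix x).
exact: ler_wpDl (frob2_coordmx_ge0 ix x) (lexx eps).
Qed.

Lemma inv_rfrob_ge0 ix x : 0 <= inv_rfrob ix x.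
Proof. by rewrite invr_ge0 ltW ?rfrob_gt0. Qed.

Lemma inv_rfrob_le ix x : inv_rfrob ix x <= (Num.sqrt eps)^-1.
Proof.
by move: (sqrt_eps_le_rfrob ix x); rewrite -lef_pV2 ?posrE ?sqrtr_gt0 ?frob2_eps_gt0.
Qed.

Lemma abs_ncoord_le1 ix k x : `|ncoord ix k x| <= 1.
Proof.
have s_gt0 := rfrob_gt0 ix x.
rewrite /ncoord /inv_rfrob normrM normfV (gtr0_norm s_gt0) ler_pdivrMr //.
by rewrite mul1r abs_coord_le_rfrob.
Qed.

Lemma is_derive_rfrob ix x v : is_derive x v (rfrob ix) (ndot ix v x).
Proof.
have dS : is_derive x v (fun y => frob2 (coordmx ix y) + eps)
    (2 * \sum_i \sum_j x ord0 (ix (i, j)) * v ord0 (ix (i, j))).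
  rewrite frob2_coordmxE; apply: is_derive_eq.
    apply: is_deriveD; apply: is_derive_sum => i; apply: is_derive_sum => j.
    by apply: is_deriveX; apply: is_derive_coord.
  rewrite addr0 mulr_sumr; apply: eq_bigr => i _.
  by rewrite mulr_sumr; apply: eq_bigr => j _ /=; rewrite expr1 mulrA.
have -> : ndot ix v x =
    (\sum_i \sum_j x ord0 (ix (i, j)) * v ord0 (ix (i, j))) / rfrob ix x.
  rewrite mulr_suml; apply: eq_bigr => i _; rewrite mulr_suml.
  by apply: eq_bigr => j _; rewrite /ncoord /inv_rfrob mulrCA mulrA.
apply: (is_derive_eq (f := rfrob ix)
  (is_derive_comp1 (f := fun y => frob2 (coordmx ix y) + eps)
     (is_derive1_sqrt (frob2_eps_gt0 ix x)) dS)).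
rewrite -/(rfrob ix x); have := rfrob_gt0 ix x; move: (rfrob ix x) => s s_gt0.
by field; rewrite gt_eqF.
Qed.

Lemma is_derive_inv_rfrob ix x v :
  is_derive x v (inv_rfrob ix) (- (inv_rfrob ix x * (inv_rfrob ix x * ndot ix v x))).
Proof.
have s_neq0 : rfrob ix x != 0 by rewrite gt_eqF ?rfrob_gt0.
have [dr Dr] := is_derive_rfrob ix x v.
split; first exact: derivableV.
by rewrite deriveV // Dr /inv_rfrob mulrA -expr2 exprVn scaleNr.
Qed.

Lemma is_derive_ncoord ix k x v :
  is_derive x v (ncoord ix k)
    (v ord0 (ix k) * inv_rfrob ix x - ncoord ix k x * (inv_rfrob ix x * ndot ix v x)).
Proof.
apply: (is_derive_eq (f := ncoord ix k))
  (is_deriveM (is_derive_coord (ix k) x v) (is_derive_inv_rfrob ix x v)) _.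
by rewrite /GRing.scale /= /ncoord; ring.
Qed.

Lemma differentiable_rfrob ix x : differentiable (rfrob ix) x.
Proof.
have -> : rfrob ix = Num.sqrt \o (fun y => frob2 (coordmx ix y) + eps) by [].
apply: differentiable_comp.
  rewrite frob2_coordmxE; apply: differentiableD => //.
  apply: differentiable_sum => i; apply: differentiable_sum => j.
  exact/differentiableX/differentiable_coord.
apply/derivable1_diffP.
by case: (is_derive1_sqrt (frob2_eps_gt0 ix x)).
Qed.

Lemma differentiable_inv_rfrob ix x : differentiable (inv_rfrob ix) x.
Proof.
by apply: differentiableV; [exact: differentiable_rfrob | rewrite gt_eqF ?rfrob_gt0].
Qed.

Lemma differentiable_ncoord ix k x : differentiable (ncoord ix k) x.
Proof.
by apply: differentiableM; [exact: differentiable_coord | exact: differentiable_inv_rfrob].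
Qed.

Inductive npoly : (V -> R) -> Prop :=
| npoly_cst c : npoly (cst c)
| npoly_inv_rfrob ix : npoly (inv_rfrob ix)
| npoly_ncoord ix k : npoly (ncoord ix k)
| npolyD f g : npoly f -> npoly g -> npoly (f + g)
| npolyM f g : npoly f -> npoly g -> npoly (f * g).

Lemma npolyN f : npoly f -> npoly (- f).
Proof.
move=> nf; have -> : - f = cst (-1) * f by apply/funext => x; rewrite /= mulN1r.
exact: npolyM (npoly_cst _) nf.
Qed.

Lemma npolyB f g : npoly f -> npoly g -> npoly (f - g).
Proof. by move=> nf ng; apply: npolyD nf (npolyN ng). Qed.

Lemma npoly_sum (I : finType) (F : I -> V -> R) :
  (forall i, npoly (F i)) -> npoly (\sum_i F i).
Proof. by move=> nF; apply: big_ind => //; [exact: npoly_cst 0 | exact: npolyD]. Qed.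

Lemma npoly_ndot ix v : npoly (ndot ix v).
Proof.
have -> : ndot ix v = \sum_i \sum_j cst (v ord0 (ix (i, j))) * ncoord ix (i, j).
  apply/funext => x; rewrite /ndot fct_sumE; apply: eq_bigr => i _.
  by rewrite fct_sumE.
apply: npoly_sum => i; apply: npoly_sum => j.
exact: npolyM (npoly_cst _) (npoly_ncoord _ _).
Qed.

Lemma differentiable_npoly f : npoly f -> forall x, differentiable f x.
Proof.
elim=> {f} [c|ix|ix k|f g _ df _ dg|f g _ df _ dg] x.
- exact: differentiable_cst.
- exact: differentiable_inv_rfrob.
- exact: differentiable_ncoord.
- exact: differentiableD.
- exact: differentiableM.
Qed.

Lemma bounded_npoly f : npoly f -> exists C : R, forall x, `|f x| <= C.
Proof.
elim=> {f} [c|ix|ix k|f g _ [Cf fC] _ [Cg gC]|f g _ [Cf fC] _ [Cg gC]].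
- by exists `|c|.
- exists (Num.sqrt eps)^-1 => x.
  by rewrite ger0_norm ?inv_rfrob_ge0 ?inv_rfrob_le.
- by exists 1; exact: abs_ncoord_le1.
- exists (Cf + Cg) => x; exact: le_trans (ler_normD _ _) (lerD (fC x) (gC x)).
- by exists (Cf * Cg) => x; rewrite normrM; apply: ler_pM.
Qed.

Lemma npoly_partial f i : npoly f -> npoly (partial f i).
Proof.
have dP g x : npoly g -> is_derive x (evec R i) g (partial g i x).
  by move=> ng; apply/is_derive_partial/differentiable_npoly.
elim=> {f} [c|ix|ix k|f g nf pf ng pg|f g nf pf ng pg].
- have -> : partial (cst c) i = cst 0.
    by apply/funext => x; rewrite /partial derive_cst.
  exact: npoly_cst.
- have -> : partial (inv_rfrob ix) i =
      - (inv_rfrob ix * (inv_rfrob ix * ndot ix (evec R i))).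
    by apply/funext => x; exact/partial_val/is_derive_inv_rfrob.
  apply/npolyN/npolyM; first exact: npoly_inv_rfrob.
  exact: npolyM (npoly_inv_rfrob _) (npoly_ndot _ _).
- have -> : partial (ncoord ix k) i = cst (evec R i ord0 (ix k)) * inv_rfrob ix -
      ncoord ix k * (inv_rfrob ix * ndot ix (evec R i)).
    by apply/funext => x; exact/partial_val/is_derive_ncoord.
  apply: npolyB; first exact: npolyM (npoly_cst _) (npoly_inv_rfrob _).
  apply/npolyM; first exact: npoly_ncoord.
  exact: npolyM (npoly_inv_rfrob _) (npoly_ndot _ _).
- have -> : partial (f + g) i = partial f i + partial g i.
    by apply/funext => x; apply/partial_val; exact: is_deriveD (dP f x nf) (dP g x ng).
  exact: npolyD.
- have -> : partial (f * g) i = f * partial g i + g * partial f i.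
    by apply/funext => x; apply/partial_val; exact: is_deriveM (dP f x nf) (dP g x ng).
  exact: npolyD (npolyM nf pg) (npolyM ng pf).
Qed.

Lemma npoly_partial_ubound f : npoly f ->
  exists C : R, 0 <= C /\ forall i x, `|partial f i x| <= C.
Proof. by move=> nf; apply: fin_ubound => i; apply/bounded_npoly/npoly_partial. Qed.

Lemma npoly_hess_ubound f : npoly f ->
  exists H : R, 0 <= H /\ forall i j x, `|hess f i j x| <= H.
Proof.
move=> nf; have [H [H0 fH]] : exists H : R, 0 <= H /\
    forall (ij : 'I_n * 'I_n) x, `|hess f ij.1 ij.2 x| <= H.
  by apply: fin_ubound => ij; apply/bounded_npoly/npoly_partial/npoly_partial.
by exists H; split=> // i j; apply: (fH (i, j)).
Qed.

Lemma npoly_lipschitz f : npoly f ->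
  exists K : R, forall y z, `|f y - f z| <= K * enorm (y - z).
Proof.
move=> nf; have [C [_ fC]] := npoly_partial_ubound nf.
exists (n%:R * C); exact: lipschitz_of_bounded_partials (differentiable_npoly nf) fC.
Qed.

Lemma twice_differentiable_npoly f : npoly f -> twice_differentiable f.
Proof.
move=> nf x; split=> [|i]; first exact: differentiable_npoly.
exact/differentiable_npoly/npoly_partial.
Qed.

Lemma hess_locally_lipschitz_npoly f : npoly f -> hess_locally_lipschitz f.
Proof.
move=> nf i j x; have [K fK] := npoly_lipschitz (npoly_partial j (npoly_partial i nf)).
by exists 1; split=> //; exists K => y z _ _; exact: fK.
Qed.

End NormalisedCoordinates.

Arguments npoly_cst {R n eps} c.

Section Trigonometric.
Variable R : realType.
Implicit Types a b c u : R.

Lemma abs_trig_le a b c u : `|cos u * a + sin u * b + c| <= `|a| + `|b| + `|c|.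
Proof.
apply: le_trans (ler_normD _ _) (lerD _ (lexx _)).
apply: le_trans (ler_normD _ _) _; rewrite !normrM.
by apply: lerD; apply: ler_piMl; rewrite ?cos_max ?sin_max.
Qed.

Lemma abs_dtrig_le a b u : `|- sin u * a + cos u * b| <= `|a| + `|b|.
Proof.
apply: le_trans (ler_normD _ _) _; rewrite !normrM normrN.
by apply: lerD; apply: ler_piMl; rewrite ?cos_max ?sin_max.
Qed.

Lemma is_derive_trig a b c u :
  is_derive u 1 (fun u => cos u * a + sin u * b + c) (- sin u * a + cos u * b).
Proof.
have -> : (fun u => cos u * a + sin u * b + c) = cos * cst a + sin * cst b + cst c
  by [].
by apply: is_derive_eq; rewrite /GRing.scale /=; ring.
Qed.

Lemma sum3E (V : nmodType) (F : 'I_3 -> V) : \sum_i F i = F 0 + F 1 + F 2.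
Proof.
by rewrite !big_ord_recl big_ord0 addr0 addrA; congr (F _ + F _ + F _); apply: val_inj.
Qed.

Lemma mxtrace_mulmx_trRx (M : 'M[R]_3) u :
  \tr (M *m (Rx u)^T) = M 0 0 + cos u * (M 1 1 + M 2 2) + sin u * (M 2 1 - M 1 2).
Proof. by rewrite /mxtrace sum3E !mxE !sum3E !mxE /=; ring. Qed.

End Trigonometric.

Section TrigonometricFamily.
Variables (R : realType) (n : nat) (eps : R).
Hypothesis eps_gt0 : 0 < eps.
Local Notation V := 'rV[R]_n.
Variables P Q T : V -> R.
Hypotheses (nP : npoly eps P) (nQ : npoly eps Q) (nT : npoly eps T).

Lemma npoly_trig u : npoly eps (fun x => cos u * P x + sin u * Q x + T x).
Proof.
have -> : (fun x => cos u * P x + sin u * Q x + T x) =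
    cst (cos u) * P + cst (sin u) * Q + T by [].
exact: npolyD (npolyD (npolyM (npoly_cst _) nP) (npolyM (npoly_cst _) nQ)) nT.
Qed.

Lemma partial_trig u i :
  partial (fun x => cos u * P x + sin u * Q x + T x) i =
  fun x => cos u * partial P i x + sin u * partial Q i x + partial T i x.
Proof.
by apply/funext => x; apply: partial_lincomb; apply: (differentiable_npoly eps_gt0).
Qed.

Lemma curvature_bounded_trig :
  exists L : R, forall u, curvature_bounded L (fun x => cos u * P x + sin u * Q x + T x).
Proof.
have [HP [HP0 PH]] := npoly_hess_ubound eps_gt0 nP.
have [HQ [HQ0 QH]] := npoly_hess_ubound eps_gt0 nQ.
have [HT [HT0 TH]] := npoly_hess_ubound eps_gt0 nT.
exists (2 * n%:R ^+ 2 * (HP + HQ + HT)) => u.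
apply: curvature_bounded_of_hess; first by rewrite !addr_ge0.
- by move=> y; apply: (differentiable_npoly eps_gt0 (npoly_trig u)).
- move=> i y.
  by apply: (differentiable_npoly eps_gt0 (npoly_partial eps_gt0 i (npoly_trig u))).
move=> i j x; have dpartial f : npoly eps f -> differentiable (partial f i) x.
  by move=> nf; apply: (differentiable_npoly eps_gt0 (npoly_partial eps_gt0 i nf)).
rewrite /hess partial_trig partial_lincomb;
  [|exact: dpartial _ nP|exact: dpartial _ nQ|exact: dpartial _ nT].
apply: le_trans (abs_trig_le _ _ _ _) _.
by apply: lerD; [apply: lerD|]; [exact: PH | exact: QH | exact: TH].
Qed.

Lemma mixed_trig_bounded : exists M : R, forall (theta : V) u,
  let b := fun th u => cos u * P th + sin u * Q th + T th in
  (forall i, derivable (mixed_fun b i theta) u 1) /\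
  enorm (\row_i derive1 (mixed_fun b i theta) u) <= M.
Proof.
have [CP [_ PC]] := npoly_partial_ubound eps_gt0 nP.
have [CQ [_ QC]] := npoly_partial_ubound eps_gt0 nQ.
exists (n%:R * (CP + CQ)) => th u b.
have mixedE i : mixed_fun b i th = fun u =>
    cos u * partial P i th + sin u * partial Q i th + partial T i th.
  by apply/funext => w; rewrite /mixed_fun /b partial_trig.
have dtrig i := is_derive_trig (partial P i th) (partial Q i th) (partial T i th) u.
split=> [i|]; first by rewrite mixedE; case: (dtrig i).
apply: le_trans (enorm_le_sum _) _.
apply: (@le_trans _ _ (\sum_(i < n) (CP + CQ))); last first.
  by rewrite sumr_const card_ord mulr_natl.
apply: ler_sum => i _; rewrite mxE mixedE derive1E.
have [_ ->] := dtrig i.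
by apply: le_trans (abs_dtrig_le _ _ _) (lerD (PC i th) (QC i th)).
Qed.

End TrigonometricFamily.

Section Decomposition.
Variables (R : realType) (n : nat) (eps : R).
Hypothesis eps_gt0 : 0 < eps.
Local Notation V := 'rV[R]_n.
Implicit Types (ia ib ix : 'I_3 * 'I_3 -> 'I_n) (x : V).

Definition nmx ix x : 'M[R]_3 := \matrix_(i, j) ncoord eps ix (i, j) x.

Lemma coordmx_nmx ix x : coordmx ix x = rfrob eps ix x *: nmx ix x.
Proof.
apply/matrixP => i j; rewrite !mxE /ncoord /inv_rfrob mulrCA divff ?mulr1 //.
by rewrite gt_eqF ?rfrob_gt0.
Qed.

Lemma bfun_nmx ia ib x u :
  bfun ia ib eps x u = - \tr ((nmx ia x)^T *m nmx ib x *m (Rx u)^T).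
Proof.
rewrite /bfun /= -/(rfrob eps ia x) -/(rfrob eps ib x) !coordmx_nmx.
rewrite [(_ *: nmx ia x)^T]linearZ /= -!scalemxAl -scalemxAr -scalemxAl !mxtraceZ.
have := rfrob_gt0 eps_gt0 ia x; have := rfrob_gt0 eps_gt0 ib x.
move: (rfrob eps ia x) (rfrob eps ib x) => sa sb sb_gt0 sa_gt0.
by field; rewrite !gt_eqF.
Qed.

Lemma bfun_trig ia ib : exists P Q T : V -> R,
  [/\ npoly eps P, npoly eps Q, npoly eps T &
      bfun ia ib eps = fun x u => cos u * P x + sin u * Q x + T x].
Proof.
pose G i j x := ((nmx ia x)^T *m nmx ib x) i j.
have nG i j : npoly eps (G i j).
  have -> : G i j = \sum_l ncoord eps ia (l, i) * ncoord eps ib (l, j).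
    apply/funext => x; rewrite /G fct_sumE !mxE.
    by apply: eq_bigr => l _; rewrite !mxE.
  by apply: npoly_sum => l; apply: npolyM; apply: npoly_ncoord.
exists (- (G 1 1 + G 2 2)), (G 1 2 - G 2 1), (- G 0 0); split.
- exact: npolyN (npolyD (nG _ _) (nG _ _)).
- exact: npolyB (nG _ _) (nG _ _).
- exact: npolyN (nG _ _).
apply/funext => x; apply/funext => u.
by rewrite bfun_nmx mxtrace_mulmx_trRx !fctE /G; ring.
Qed.

End Decomposition.

Unset Implicit Arguments.

Theorem corollary11 (R : realType) (n : nat) (X : set R) (eps : R)
  (ia ib : 'I_3 * 'I_3 -> 'I_n)
  (hXne : X !=set0) (hXc : compact X) (hXcvx : convex_setR X)
  (heps : 0 < eps)
  (hia : injective ia) (hib : injective ib)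
  (hab : forall p q, ia p <> ib q) :
  (forall u, X u ->
     twice_differentiable (fun th => bfun ia ib eps th u) /\
     hess_locally_lipschitz (fun th => bfun ia ib eps th u)) /\
  (exists L : R, forall u, X u ->
     curvature_bounded L (fun th => bfun ia ib eps th u)) /\
  (exists M : R, forall (theta : 'rV[R]_n) (u : R), X u ->
     (forall i : 'I_n, derivable (mixed_fun (bfun ia ib eps) i theta) u 1) /\
     enorm (\row_i derive1 (mixed_fun (bfun ia ib eps) i theta) u) <= M).
Proof.
have [P [Q [T [nP nQ nT ->]]]] := bfun_trig heps ia ib.
split=> [u _|]; first split.
- exact (twice_differentiable_npoly heps (npoly_trig nP nQ nT u)).
- exact (hess_locally_lipschitz_npoly heps (npoly_trig nP nQ nT u)).
split.
- have [L PL] := curvature_bounded_trig heps nP nQ nT.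
  by exists L => u _; exact: PL.
- have [M PM] := mixed_trig_bounded heps nP nQ nT.
  by exists M => theta u _; exact: PM.
Qed.
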